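(* Let $A$ be an associative (not necessarily unital) algebra over a field satisfying the identity $x_1\cdots x_n=x_{\sigma(1)}\cdots x_{\sigma(n)}$, where $\sigma\in S_n$ satisfies $\sigma(1)\ne1$ and $\sigma(n)\ne n$. Then $H_{n+2}$ contains $S(n+2;4,4)$.
   Context: For each $k$, $H_k\subseteq S_k$ is the set of permutations $\tau$ such that $A$ satisfies $x_1\cdots x_k=x_{\tau(1)}\cdots x_{\tau(k)}$ (i.e. $a_1\cdots a_k=a_{\tau(1)}\cdots a_{\tau(k)}$ for all $a_1,\dots,a_k\in A$). For $m\ge a,b$, $S(m;a,b)$ denotes the subgroup of $S_m$ generated by all permutations of the first $a$ letters $\{1,\dots,a\}$ and all permutations of the last $b$ letters $\{m-b+1,\dots,m\}$. *)

From HB Require Import structures.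
From mathcomp Require Import all_boot all_order all_algebra all_fingroup.
Set Implicit Arguments. Unset Strict Implicit. Unset Printing Implicit Defensive.
Import GRing.Theory.
Local Open Scope ring_scope.

Definition assoc_algebra (K : fieldType) (A : lmodType K) (mul : A -> A -> A) : Prop :=
  [/\ forall (c : K) (x y z : A), mul (c *: x + y) z = c *: mul x z + mul y z,
      forall (c : K) (x y z : A), mul x (c *: y + z) = c *: mul x y + mul x z
    & forall x y z : A, mul x (mul y z) = mul (mul x y) z].

(* Product of a nonempty word x_1 ... x_k (left-bracketed; by associativity
   the bracketing is irrelevant). The empty word is sent to 0 (never used). *)
Definition wprod (A : zmodType) (mul : A -> A -> A) (s : seq A) : A :=
  if s is x :: s' then foldl mul x s' else 0.

(* x_1 ... x_k for a : 'I_k -> A  (index i : 'I_k stands for letter i+1) *)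
Definition ordprod (A : zmodType) (mul : A -> A -> A) (k : nat) (a : 'I_k -> A) : A :=
  wprod mul [seq a i | i <- enum 'I_k].

Definition inH (A : zmodType) (mul : A -> A -> A) (k : nat) (tau : 'S_k) : Prop :=
  forall a : 'I_k -> A, ordprod mul a = ordprod mul (fun i => a (tau i)).

(* S(m; a, b): subgroup of S_m generated by the permutations of the first a
   letters {1..a} (0-based: indices < a) and of the last b letters
   {m-b+1..m} (0-based: indices >= m - b). *)
Definition Sab (m a b : nat) : {set 'S_m} :=
  <<[set s : 'S_m | [forall i : 'I_m, (a <= i)%N ==> (s i == i)]]
    :|: [set s : 'S_m | [forall i : 'I_m, (i < m - b)%N ==> (s i == i)]]>>%g.

From mathcomp Require Import all_boot all_order all_algebra all_fingroup.
From mathcomp Require Import zify.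
Set Implicit Arguments. Unset Strict Implicit. Unset Printing Implicit Defensive.

(* Inserting a fresh letter z into x_1 ... x_n in gap g (0 <= g <= n) gives
   n + 1 words.  Substituting z x_k or x_k z for x_k in the identity of sigma
   and renaming the variables moves z next to x_k in the permuted word;
   following such moves from the front gap, and using sigma(1) <> 1, gives
   z x_1 ... x_n = x_1 ... x_m z x_(m+1) ... x_n for some m >= 2.  Appending a
   letter, or merging the first two, turns this into identities of length n + 2
   moving z from the front to position m or m + 1.  Conjugating by the move of
   another letter to the front then gives the identities of the adjacent
   transpositions (1 2), (2 3), (3 4), which generate the permutations of the
   first four letters.  The last four letters are handled by the same argument
   in the opposite algebra, which reverses words and where sigma(n) <> n plays
   the role of sigma(1) <> 1. *)

Ltac case_ifs := repeat match goal with
  | |- context [if ?b then _ else _] => case: (boolP b) => ? end.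
Ltac index_eq := first [ reflexivity | (exfalso; lia) | (apply: congr1; lia)
  | (apply: congr2; index_eq) | (apply: congr1; index_eq) ].
Ltac solve_index := case_ifs; index_eq.

Section Letters.

Variable T : Type.
Implicit Types (f w : nat -> T) (z : T).

Definition ins g f z : nat -> T :=
  fun i => if i < g then f i else if i == g then z else f i.-1.

Definition del g f : nat -> T := fun i => if i < g then f i else f i.+1.

Definition upd f g z : nat -> T := fun i => if i == g then z else f i.

Lemma ins_del g f : f =1 ins g (del g f) (f g).
Proof. by move=> i; rewrite /ins /del; solve_index. Qed.

Lemma eq_ins g f f' z : f =1 f' -> ins g f z =1 ins g f' z.
Proof. by move=> eq_f i; rewrite /ins !eq_f. Qed.

Lemma ins_comm g h w y z : g <= h -> ins g (ins h w y) z =1 ins h.+1 (ins g w z) y.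
Proof. by move=> hgh i; rewrite /ins; solve_index. Qed.

End Letters.

Lemma wprod_rcons (A : zmodType) (mul : A -> A -> A) x s :
  s != [::] -> wprod mul (rcons s x) = mul (wprod mul s) x.
Proof. by case: s => [|y s] //= _; rewrite -cats1 foldl_cat. Qed.

Section WordProducts.

Variables (A : zmodType) (mul : A -> A -> A).
Hypothesis mulA : associative mul.
Implicit Types (f w : nat -> A) (x y z : A) (s : seq A).

Lemma foldl_mulA x y s : foldl mul (mul x y) s = mul x (foldl mul y s).
Proof. by elim: s y => [|a s IH] y //=; rewrite -mulA IH. Qed.

Lemma wprod_cons x s : s != [::] -> wprod mul (x :: s) = mul x (wprod mul s).
Proof. by case: s => [|y s] //= _; rewrite foldl_mulA. Qed.

Lemma wprod_merge s1 x y s2 :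
  wprod mul (s1 ++ x :: y :: s2) = wprod mul (s1 ++ mul x y :: s2).
Proof. by case: s1 => [|a s1] //=; rewrite !foldl_cat /= mulA. Qed.

Lemma wprod_rev s : wprod (fun x y => mul y x) s = wprod mul (rev s).
Proof.
elim/last_ind: s => [|s x IH] //; rewrite rev_rcons.
case: (eqVneq s [::]) => [-> //|s_nil].
by rewrite wprod_rcons // IH wprod_cons // -size_eq0 size_rev size_eq0.
Qed.

Definition natprod k f : A := wprod mul [seq f i | i <- iota 0 k].

Definition merge_at g f : nat -> A :=
  fun i => if i < g then f i else if i == g then mul (f g) (f g.+1) else f i.+1.

Lemma eq_natprod k f f' : (forall i, i < k -> f i = f' i) -> natprod k f = natprod k f'.
Proof.
by move=> eq_f; congr wprod; apply/eq_in_map => i; rewrite mem_iota => /andP[_ /eq_f].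
Qed.

Lemma natprod_recl k f : 0 < k -> natprod k.+1 f = mul (f 0) (natprod k (f \o succn)).
Proof.
move=> k_gt0; rewrite /natprod.
have -> : iota 0 k.+1 = 0 :: map succn (iota 0 k) by rewrite /= (iotaDl 1 0).
by rewrite map_cons wprod_cons -map_comp //; case: k k_gt0.
Qed.

Lemma natprod_recr k f : 0 < k -> natprod k.+1 f = mul (natprod k f) (f k).
Proof.
by move=> k_gt0; rewrite /natprod -addn1 iotaD map_cat cats1 wprod_rcons //; case: k k_gt0.
Qed.

Lemma natprod_merge k g f : g < k -> natprod k.+1 f = natprod k (merge_at g f).
Proof.
move=> g_lt_k; have [d ->] : exists d, k = g + d.+1 by exists (k - g.+1); lia.
rewrite /natprod -addnS !iotaD !add0n !map_cat.
rewrite -[iota g d.+2]/(g :: g.+1 :: iota g.+2 d) -[iota g d.+1]/(g :: iota g.+1 d).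
rewrite !map_cons wprod_merge.
congr (wprod _ (_ ++ _ :: _)).
- by apply/eq_in_map => i; rewrite mem_iota /merge_at => /andP[_ ->].
- by rewrite /merge_at ltnn eqxx.
- rewrite (iotaDl 1 g.+1) -map_comp; apply/eq_in_map => i.
  by rewrite mem_iota /merge_at => /andP[gi _] /=; solve_index.
Qed.

Lemma natprod_ins_left n k f z :
  k < n -> natprod n.+1 (ins k f z) = natprod n (upd f k (mul z (f k))).
Proof.
move=> kn; rewrite (natprod_merge _ kn); apply: eq_natprod => i _.
by rewrite /merge_at /upd /ins; solve_index.
Qed.

Lemma natprod_ins_right n k f z :
  k < n -> natprod n.+1 (ins k.+1 f z) = natprod n (upd f k (mul (f k) z)).
Proof.
move=> kn; rewrite (natprod_merge _ kn); apply: eq_natprod => i _.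
by rewrite /merge_at /upd /ins; solve_index.
Qed.

Lemma natprod_ins0 n f z : 0 < n -> natprod n.+1 (ins 0 f z) = mul z (natprod n f).
Proof. by move=> n_gt0; rewrite natprod_recl. Qed.

Lemma natprod_ins_last n f z : 0 < n -> natprod n.+1 (ins n f z) = mul (natprod n f) z.
Proof.
move=> n_gt0; rewrite natprod_recr /ins ?ltnn ?eqxx //; congr mul.
by apply: eq_natprod => i ->.
Qed.

Definition ins_equiv n g h :=
  forall f z, natprod n.+1 (ins g f z) = natprod n.+1 (ins h f z).

Lemma ins_equiv_snoc n g h : g <= n -> h <= n -> ins_equiv n g h -> ins_equiv n.+1 g h.
Proof.
move=> gn hn E w z; rewrite natprod_recr // [RHS]natprod_recr // E.
by congr mul; rewrite /ins; solve_index.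
Qed.

Lemma ins_equiv_merge n i g h :
  g <= i < h -> i < n -> ins_equiv n g h -> ins_equiv n.+1 g h.+1.
Proof.
move=> /andP[gi ih] i_lt_n E w z.
rewrite (natprod_merge (g := i.+1)) // [RHS](natprod_merge (g := i)) //; last lia.
transitivity (natprod n.+1 (ins g (merge_at i w) z)).
  by apply: eq_natprod => j _; rewrite /merge_at /ins; solve_index.
rewrite E; apply: eq_natprod => j _; rewrite /merge_at /ins; solve_index.
Qed.

Lemma ins_equiv_down n k M :
  ins_equiv n k.+1 k.+2 -> ins_equiv n 0 M.+1 -> k < M -> ins_equiv n k k.+1.
Proof.
(* Move the letter at position M to the front, swap there, and move it back. *)
move=> Ek E0 kM w z; set y := w M; set w' := del M w.
have eq_w : w =1 ins M w' y := ins_del M w.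
transitivity (natprod n.+1 (ins M.+1 (ins k w' z) y)).
  by apply: eq_natprod => i _; rewrite -ins_comm; [exact: eq_ins | lia].
rewrite -E0; transitivity (natprod n.+1 (ins k.+1 (ins 0 w' y) z)).
  by apply: eq_natprod => i _; rewrite ins_comm.
rewrite Ek; transitivity (natprod n.+1 (ins 0 (ins k.+1 w' z) y)).
  by apply: eq_natprod => i _; rewrite [RHS]ins_comm.
rewrite E0; apply: eq_natprod => i _; rewrite -ins_comm; last lia.
by apply: eq_ins => j; rewrite eq_w.
Qed.

Lemma ins_equiv_adj n M :
  ins_equiv n 0 M -> ins_equiv n 0 M.+1 -> forall k, k <= M -> ins_equiv n k k.+1.
Proof.
move=> E0 E1 k kM; rewrite -(subKn kM).
elim: (M - k) (leq_subr k M) => [|d IH] dM.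
  by rewrite subn0 => w z; rewrite -E0 E1.
apply: (ins_equiv_down (M := M)) => //; last lia.
have -> : (M - d.+1).+1 = M - d by lia.
by apply: IH; lia.
Qed.

End WordProducts.

Definition natperm N (s : 'S_N) (i : nat) : nat :=
  if insub i is Some j then val (s j) else i.

Lemma natpermE N (s : 'S_N) (j : 'I_N) : natperm s j = s j.
Proof. by rewrite /natperm valK. Qed.

Lemma natperm_out N (s : 'S_N) i : N <= i -> natperm s i = i.
Proof. by move=> Ni; rewrite /natperm insubN // -leqNgt. Qed.

Lemma natperm_neq_lt N (s : 'S_N) i : natperm s i != i -> i < N.
Proof. by rewrite ltnNge; apply: contra => /natperm_out ->. Qed.

Lemma natperm_lt N (s : 'S_N) i : (natperm s i < N) = (i < N).
Proof.
case: (ltnP i N) => [iN | Ni]; last by rewrite natperm_out // ltnNge Ni.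
by rewrite -[i]/(val (Ordinal iN)) natpermE !ltn_ord.
Qed.

Lemma natpermK N (s : 'S_N) : cancel (natperm s) (natperm s^-1%g).
Proof.
move=> i; case: (ltnP i N) => [iN | Ni]; last by rewrite !natperm_out.
by rewrite -[i]/(val (Ordinal iN)) !natpermE permK.
Qed.

Lemma natpermKV N (s : 'S_N) : cancel (natperm s^-1%g) (natperm s).
Proof. by move=> i; have := natpermK s^-1%g i; rewrite invgK. Qed.

Lemma rev_enum_ord k : rev (enum 'I_k) = map (@rev_ord k) (enum 'I_k).
Proof.
apply: (inj_map val_inj); rewrite map_rev val_enum_ord -map_comp.
rewrite (@eq_map _ _ _ ((fun j => k - j.+1) \o val)) // map_comp val_enum_ord.
apply: (@eq_from_nth _ 0) => [|i]; rewrite size_rev ?size_map size_iota // => ik.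
by rewrite nth_rev ?size_iota // (nth_map 0) ?size_iota // !nth_iota //; lia.
Qed.

Definition rev_perm N : 'S_N := perm (@rev_ord_inj N).

Lemma rev_permV N : ((rev_perm N)^-1)%g = rev_perm N.
Proof.
by apply/permP => i; apply: (@perm_inj _ (rev_perm N)); rewrite permKV !permE rev_ordK.
Qed.

Lemma conj_rev_permE N (s : 'S_N) i : (s ^ rev_perm N)%g i = rev_ord (s (rev_ord i)).
Proof. by rewrite conjgE !permM rev_permV !permE. Qed.

Lemma conj_rev_permK N : involutive (fun s : 'S_N => s ^ rev_perm N)%g.
Proof. by move=> s; rewrite /= -conjgM -{1}rev_permV mulVg conjg1. Qed.

Section Identities.

Variables (A : zmodType) (mul : A -> A -> A).
Hypothesis mulA : associative mul.

Lemma eq_ordprod k (a b : 'I_k -> A) : a =1 b -> ordprod mul a = ordprod mul b.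
Proof. by move=> eq_ab; rewrite /ordprod (eq_map eq_ab). Qed.

Lemma ordprod_nat k (f : nat -> A) : ordprod mul (fun i : 'I_k => f i) = natprod mul k f.
Proof. by rewrite /ordprod /natprod -val_enum_ord -map_comp. Qed.

Lemma ordprod_rev k (a : 'I_k -> A) :
  ordprod (fun x y => mul y x) a = ordprod mul (a \o @rev_ord k).
Proof. by rewrite /ordprod wprod_rev // -map_rev rev_enum_ord -map_comp. Qed.

Lemma inH_natP N (s : 'S_N) :
  inH mul s <-> forall f, natprod mul N f = natprod mul N (f \o natperm s).
Proof.
split=> [Hs f | H a].
  by rewrite -!ordprod_nat Hs; apply: eq_ordprod => i /=; rewrite natpermE.
pose f i : A := oapp a 0%R (insub i).
have fE (i : 'I_N) : f i = a i by rewrite /f valK.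
rewrite -(eq_ordprod fE) -(eq_ordprod (fun i => fE (s i))) ordprod_nat H -ordprod_nat.
by apply: eq_ordprod => i /=; rewrite natpermE.
Qed.

Lemma inH1 N : inH mul (1 : 'S_N).
Proof. by move=> a; apply: eq_ordprod => i; rewrite perm1. Qed.

Lemma inHM N (s t : 'S_N) : inH mul s -> inH mul t -> inH mul (s * t)%g.
Proof.
by move=> Hs Ht a; rewrite Ht Hs; apply: eq_ordprod => i; rewrite permM.
Qed.

Lemma inH_gen N (S : {set 'S_N}) :
  {in S, forall s, inH mul s} -> forall s, s \in <<S>>%g -> inH mul s.
Proof.
move=> HS s /gen_prodgP[k [c Sc ->]]; elim: k c Sc => [|k IH] c Sc.
  by rewrite big_ord0; apply: inH1.
by rewrite big_ord_recr; apply: inHM; [apply: IH => i | apply: HS].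
Qed.

Lemma inH_rev N (s : 'S_N) : inH mul s -> inH (fun x y => mul y x) (s ^ rev_perm N)%g.
Proof.
move=> Hs a; rewrite !ordprod_rev Hs; apply: eq_ordprod => i /=.
by rewrite conj_rev_permE rev_ordK.
Qed.

Lemma inH_tperm_adj N (i j : 'I_N) :
  j = i.+1 :> nat -> ins_equiv mul N.-1 i j -> inH mul (tperm i j).
Proof.
move=> ji E; apply/inH_natP => f.
have N_gt0 : 0 < N by move: (ltn_ord i); lia.
have := E (del i f) (f i); rewrite prednK // => Ef.
transitivity (natprod mul N (ins i (del i f) (f i))).
  by apply: eq_natprod => x _; apply: ins_del.
rewrite Ef; apply: eq_natprod => x xN /=.
rewrite -[x]/(val (Ordinal xN)) natpermE.
case: tpermP => [->|->|/eqP + /eqP]; last rewrite -!val_eqE /= => xi xj;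
  by rewrite /ins /del ji /=; solve_index.
Qed.

End Identities.

Section AdjacentTranspositions.

Variables (N h : nat) (G : {group 'S_N}).
Hypothesis adjG : forall i j : 'I_N, j = i.+1 :> nat -> j < h -> tperm i j \in G.

Lemma tperm_mem_adj (c d : 'I_N) : c < d < h -> tperm c d \in G.
Proof.
move=> /andP[cd dh].
have [e de] : exists e, d = c + e.+1 :> nat by exists (d - c.+1); lia.
clear cd.
elim: e d de dh => [|e IH] d de dh; first by apply: adjG; lia.
have d'N : c + e.+1 < N by move: (ltn_ord d); lia.
pose d' := Ordinal d'N.
have <- : (tperm c d' ^ tperm d' d)%g = tperm c d.
  rewrite tpermJ tpermL tpermD // -val_eqE /=; lia.
by rewrite groupJ ?IH ?adjG //=; lia.
Qed.

End AdjacentTranspositions.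

Lemma perm_fix_ge_mem N h (G : {group 'S_N}) :
  (forall i j : 'I_N, j = i.+1 :> nat -> j < h -> tperm i j \in G) ->
  forall s : 'S_N, (forall i : 'I_N, h <= i -> s i = i) -> s \in G.
Proof.
elim: h => [|h IH] adjG s fix_s.
  by have -> : s = 1%g by apply/permP => i; rewrite perm1 fix_s.
have adjG' (i j : 'I_N) : j = i.+1 :> nat -> j < h -> tperm i j \in G.
  by move=> ji jh; apply: adjG; lia.
case: (ltnP h N) => [hN | Nh]; last by apply: (IH adjG') => i hi; move: (ltn_ord i); lia.
pose x := Ordinal hN; set c := s x.
have ch : c <= h.
  rewrite leqNgt; apply/negP => hc.
  by have := fix_s c hc => /perm_inj /(congr1 val) /=; lia.
rewrite -(mulgK (tperm c x) s) tpermV groupM //.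
  apply: (IH adjG') => i hi; rewrite permM.
  case: (eqVneq i x) => [-> | ix]; first by rewrite tpermL.
  have si : s i = i by apply: fix_s; move: ix; rewrite -val_eqE /=; lia.
  have ic : i != c.
    by apply: contra_neq ix => ic; apply: (@perm_inj _ s); rewrite si ic.
  by rewrite si tpermD // eq_sym.
have [cx | cx] := eqVneq c x; first by rewrite cx tperm1 group1.
apply: (tperm_mem_adj adjG); move: cx; rewrite -val_eqE /=; lia.
Qed.

Lemma upd_natperm (T : Type) N (t : 'S_N) (f : nat -> T) k y :
  upd f k y \o natperm t =1 upd (f \o natperm t) (natperm t^-1%g k) y.
Proof. by move=> i; rewrite /upd /= (can2_eq (natpermK t) (natpermKV t)). Qed.

Section FirstLetterMoved.

Variables (A : zmodType) (mul : A -> A -> A).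
Hypothesis mulA : associative mul.
Variables (n : nat) (sigma : 'S_n).
Hypotheses (Hsigma : inH mul sigma) (sigma0 : natperm sigma 0 != 0).

Local Notation s := (natperm sigma).
Local Notation s' := (natperm sigma^-1%g).
Local Notation prod := (natprod mul).

Let n_gt0 : 0 < n := natperm_neq_lt sigma0.

Lemma natprod_perm f : prod n f = prod n (f \o s).
Proof. exact: (inH_natP mul sigma).1 Hsigma f. Qed.

Lemma ins_perm_left f z k :
  k < n -> prod n.+1 (ins k f z) = prod n.+1 (ins (s' k) (f \o s) z).
Proof.
move=> kn; rewrite !natprod_ins_left ?natperm_lt // natprod_perm /= natpermKV.
by apply: eq_natprod => i _; rewrite upd_natperm.
Qed.

Lemma ins_perm_right f z k :
  k < n -> prod n.+1 (ins k.+1 f z) = prod n.+1 (ins (s' k).+1 (f \o s) z).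
Proof.
move=> kn; rewrite !natprod_ins_right ?natperm_lt // natprod_perm /= natpermKV.
by apply: eq_natprod => i _; rewrite upd_natperm.
Qed.

Lemma ins_perm_first f z : prod n.+1 (ins 0 f z) = prod n.+1 (ins 0 (f \o s) z).
Proof. by rewrite !natprod_ins0 ?n_gt0 // natprod_perm. Qed.

Lemma ins_perm_last f z : prod n.+1 (ins n f z) = prod n.+1 (ins n (f \o s) z).
Proof. by rewrite !natprod_ins_last ?n_gt0 // natprod_perm. Qed.

Lemma ins_equiv_front : exists2 m, 1 < m <= n & ins_equiv mul n 0 m.
Proof.
have s0_lt : s 0 < n by rewrite natperm_lt n_gt0.
have E0 : ins_equiv mul n 0 (s 0).
  by move=> f z; rewrite ins_perm_first [RHS]ins_perm_left // natpermK.
have [s0_gt1 | s0_le1] := ltnP 1 (s 0); first by exists (s 0) => //; lia.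
have s0_1 : s 0 = 1 by lia.
set j := s' 0.
have j_lt : j < n by rewrite natperm_lt n_gt0.
have E1 f z : prod n.+1 (ins 1 f z) = prod n.+1 (ins j.+1 (f \o s) z).
  by rewrite ins_perm_right ?n_gt0.
have [j1_lt | n_le_j1] := ltnP j.+1 n.
  exists (s j.+1).
    have r0 : s j.+1 != 0 by apply/eqP => /(congr1 s'); rewrite natpermK -/j; lia.
    have r1 : s j.+1 != 1 by apply/eqP => /(congr1 s'); rewrite natpermK -s0_1 natpermK.
    by move: (j1_lt); rewrite -(natperm_lt sigma); lia.
  by move=> f z; rewrite E0 s0_1 E1 [RHS]ins_perm_left ?natperm_lt // natpermK.
exists n; first lia.
by move=> f z; rewrite E0 s0_1 E1 (_ : j.+1 = n) -?ins_perm_last //; lia.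
Qed.

Lemma ins_equiv_prefix k : k < 3 -> ins_equiv mul n.+1 k k.+1.
Proof.
move=> k_lt3; have [m /andP[m_gt1 m_le] Em] := ins_equiv_front.
apply: (ins_equiv_adj (M := m)); last lia.
  exact: ins_equiv_snoc.
by apply: (ins_equiv_merge mulA (i := 0)); rewrite ?n_gt0 //; lia.
Qed.

End FirstLetterMoved.

Definition adj_tperms N h : {set 'S_N} :=
  [set tperm i j | i : 'I_N, j : 'I_N in [pred j : 'I_N | (j == i.+1 :> nat) && (j < h)]].

Lemma perm_fix_ge_gen N h (s : 'S_N) :
  (forall i : 'I_N, h <= i -> s i = i) -> s \in <<adj_tperms N h>>%g.
Proof.
apply: perm_fix_ge_mem => i j ji jh; apply: mem_gen; apply: imset2_f => //=.
by rewrite unfold_in /= -ji eqxx.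
Qed.

Lemma inH_fix_prefix (A : zmodType) (mul : A -> A -> A) (mulA : associative mul)
    n (sigma : 'S_n) :
  0 < n -> (forall i : 'I_n, i = 0 :> nat -> sigma i != i) -> inH mul sigma ->
  forall tau : 'S_(n + 2), (forall i : 'I_(n + 2), 4 <= i -> tau i = i) -> inH mul tau.
Proof.
move=> n_gt0 sigma0 Hsigma tau fix_tau.
have sigma0' : natperm sigma 0 != 0.
  by have := sigma0 (Ordinal n_gt0) erefl; rewrite -val_eqE /= -natpermE.
apply: (inH_gen (S := adj_tperms (n + 2) 4)); last exact: perm_fix_ge_gen.
move=> _ /imset2P[i j _ /andP[/eqP ji j4] ->]; apply: inH_tperm_adj => //.
rewrite (_ : (n + 2).-1 = n.+1) ?addn2 //.
rewrite ji; apply: (ins_equiv_prefix mulA Hsigma sigma0'); lia.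
Qed.

Theorem lemma2p14 (K : fieldType) (A : lmodType K) (mul : A -> A -> A)
  (n : nat) (sigma : 'S_n) :
  assoc_algebra mul ->
  (0 < n)%N ->
  (forall i : 'I_n, nat_of_ord i = 0%N -> sigma i != i) ->
  (forall i : 'I_n, nat_of_ord i = n.-1 -> sigma i != i) ->
  inH mul sigma ->
  forall tau : 'S_(n + 2), tau \in Sab (n + 2) 4 4 -> inH mul tau.
Proof.
move=> [_ _ mulA] n_gt0 sigma_first sigma_last Hsigma.
have mulA_op : associative (fun x y => mul y x) by move=> x y z; rewrite mulA.
apply: inH_gen => tau /setUP[] /[!inE] /forallP fix_tau.
  apply: (inH_fix_prefix mulA n_gt0 sigma_first Hsigma) => i i4.
  by apply/eqP; apply: (implyP (fix_tau i)).
rewrite -(conj_rev_permK tau); apply: (inH_rev mulA_op).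
apply: (inH_fix_prefix mulA_op n_gt0 _ (inH_rev mulA Hsigma)) => i i0.
  rewrite conj_rev_permE -(inj_eq rev_ord_inj) rev_ordK.
  by apply: sigma_last => /=; lia.
rewrite conj_rev_permE; apply: rev_ord_inj; rewrite rev_ordK.
by apply/eqP; apply: (implyP (fix_tau _)) => /=; move: (ltn_ord i); lia.
Qed.
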